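(* Let $\mathcal{C}$ be a covering of a finite set $E$ such that both $SH$ and $XH$ (defined below) are closure operators of matroids on $E$. Then $VH$ is also the closure operator of a matroid on $E$, and $\mathcal{I}_{SH}(\mathcal{C})\subseteq\mathcal{I}_{XH}(\mathcal{C})=\mathcal{I}_{VH}(\mathcal{C})$ and $\mathcal{L}_{SH}(M(\mathcal{C}))\subseteq\mathcal{L}_{XH}(M(\mathcal{C}))=\mathcal{L}_{VH}(M(\mathcal{C}))$.
   Context: A covering of $E$ is a family of nonempty subsets of $E$ with union $E$. For $x\in E$: $I(x)=\bigcup\{K\in\mathcal{C}:x\in K\}$ and $N(x)=\bigcap\{K\in\mathcal{C}:x\in K\}$. For $X\subseteq E$: $SH(X)=\bigcup\{K\in\mathcal{C}:K\cap X\neq\emptyset\}$, $XH(X)=\{x:N(x)\cap X\neq\emptyset\}$, $VH(X)=\bigcup\{N(x):N(x)\cap X\neq\emptyset\}$. When an operator $H\in\{SH,XH,VH\}$ is the closure operator of a matroid on $E$ (closure meaning $cl(X)=\{a:r(X\cup\{a\})=r(X)\}$), that matroid has independent sets $\mathcal{I}_H(\mathcal{C})=\{I\subseteq E:x\notin H(I-\{x\})\text{ for all }x\in I\}$, and $\mathcal{L}_H(M(\mathcal{C}))=\{X\subseteq E:H(X)=X\}$ denotes its set of closed sets ordered by inclusion. *)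

From mathcomp Require Import all_boot.
Set Implicit Arguments. Unset Strict Implicit. Unset Printing Implicit Defensive.

(* The finite ground set E is the whole finite type T. *)
Section Defs.
Variable T : finType.

Definition covering (C : {set {set T}}) : Prop :=
  (forall K, K \in C -> K != set0) /\ \bigcup_(K in C) K = [set: T].

Definition Iset (C : {set {set T}}) (x : T) : {set T} :=
  \bigcup_(K in C | x \in K) K.
Definition Nset (C : {set {set T}}) (x : T) : {set T} :=
  \bigcap_(K in C | x \in K) K.

Definition SH (C : {set {set T}}) (X : {set T}) : {set T} :=
  \bigcup_(K in C | K :&: X != set0) K.
Definition XH (C : {set {set T}}) (X : {set T}) : {set T} :=
  [set x | Nset C x :&: X != set0].
Definition VH (C : {set {set T}}) (X : {set T}) : {set T} :=
  \bigcup_(x | Nset C x :&: X != set0) Nset C x.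

Definition is_matroid (I : {set {set T}}) : Prop :=
  [/\ set0 \in I,
      (forall A B : {set T}, B \in I -> A \subset B -> A \in I) &
      (forall A B : {set T}, A \in I -> B \in I -> #|A| < #|B| ->
         exists2 x, x \in B :\: A & x |: A \in I)].

Definition mrank (I : {set {set T}}) (X : {set T}) : nat :=
  \max_(Y in I | Y \subset X) #|Y|.
Definition mclosure (I : {set {set T}}) (X : {set T}) : {set T} :=
  [set a | mrank I (a |: X) == mrank I X].

Definition is_matroid_closure (H : {set T} -> {set T}) : Prop :=
  exists2 I, is_matroid I & forall X, H X = mclosure I X.

Definition indep_of (H : {set T} -> {set T}) : {set {set T}} :=
  [set I : {set T} | [forall x in I, x \notin H (I :\ x)]].
Definition closed_of (H : {set T} -> {set T}) : {set {set T}} :=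
  [set X : {set T} | H X == X].

End Defs.

(* XH(∅) = ∅, so the matroid whose closure is XH has no loops and its closure
   relation between points is symmetric: x ∈ cl{y} iff y ∈ cl{x}.  Since
   x ∈ XH{y} means y ∈ N(x), the relation y ∈ N(x) is symmetric, hence N(x) = N(y)
   whenever y ∈ N(x); then VH and XH coincide.  Every point lies in some block of
   the covering, and that block contains N(x), so XH ≤ SH pointwise, which reverses
   to the inclusions between independent and closed sets. *)
From Stdlib Require Import FunctionalExtensionality.
From mathcomp Require Import all_boot.

Section MatroidClosure.
Variable T : finType.
Implicit Types (I : {set {set T}}) (X : {set T}) (H : {set T} -> {set T}).

Lemma mrank_le_card I X : mrank I X <= #|X|.
Proof. by apply/bigmax_leqP => Y /andP[_ sYX]; exact: subset_leq_card. Qed.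

Lemma mrank_set1 I z : mclosure I set0 = set0 -> mrank I [set z] = 1.
Proof.
move=> cl0; have : z \notin mclosure I set0 by rewrite cl0 inE.
have r0 : mrank I set0 = 0 by apply/eqP; rewrite -leqn0 -(cards0 T) mrank_le_card.
rewrite inE setU0 r0; have := mrank_le_card I [set z]; rewrite cards1.
by case: (mrank I [set z]) => [|[|]].
Qed.

Lemma mclosure1_sym I x y : mclosure I set0 = set0 ->
  (x \in mclosure I [set y]) = (y \in mclosure I [set x]).
Proof. by move=> cl0; rewrite !inE !mrank_set1 // setUC. Qed.

Lemma indep_of_antimono H1 H2 :
  (forall X, H1 X \subset H2 X) -> indep_of H2 \subset indep_of H1.
Proof.
move=> sH; apply/subsetP => Y; rewrite !inE => /forall_inP indepY.
by apply/forall_inP => x /indepY; apply: contra; apply/subsetP.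
Qed.

Lemma closed_of_antimono H1 H2 :
  (forall X, X \subset H1 X) -> (forall X, H1 X \subset H2 X) ->
  closed_of H2 \subset closed_of H1.
Proof.
move=> extH1 sH; apply/subsetP => X; rewrite !inE => /eqP closedX.
by rewrite eqEsubset extH1 andbT -{2}closedX sH.
Qed.

End MatroidClosure.

Section Covering.
Variables (T : finType) (C : {set {set T}}).
Implicit Types (X : {set T}) (x y : T).

Lemma Nset_self x : x \in Nset C x.
Proof. by apply/bigcapP => K /andP[]. Qed.

Lemma Nset_trans x y : y \in Nset C x -> Nset C y \subset Nset C x.
Proof.
move=> /bigcapP yNx; apply/subsetP => z /bigcapP zNy.
by apply/bigcapP => K KCx; apply: zNy; move/andP: KCx => [KC xK]; rewrite KC yNx ?KC.
Qed.

Lemma XH0 : XH C set0 = set0.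
Proof. by apply/setP => x; rewrite !inE setI0 eqxx. Qed.

Lemma in_XH1 x y : (x \in XH C [set y]) = (y \in Nset C x).
Proof.
rewrite inE; apply/set0Pn/idP => [[w] | yNx]; last by exists y; rewrite !inE yNx /=.
by rewrite !inE => /andP[wNx /eqP <-].
Qed.

Lemma subset_XH X : X \subset XH C X.
Proof. by apply/subsetP => x xX; rewrite inE; apply/set0Pn; exists x; rewrite inE Nset_self. Qed.

Lemma XH_subset_SH X : covering C -> XH C X \subset SH C X.
Proof.
move=> [_ coverC]; apply/subsetP => x; rewrite inE => /set0Pn[w].
rewrite inE => /andP[/bigcapP wNx wX].
have : x \in \bigcup_(K in C) K by rewrite coverC inE.
case/bigcupP => K KC xK; apply/bigcupP; exists K => //.
by rewrite KC; apply/set0Pn; exists w; rewrite inE wX andbT wNx ?KC.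
Qed.

Hypothesis XH_matroid : is_matroid_closure (XH C).

Lemma Nset_sym x y : y \in Nset C x -> x \in Nset C y.
Proof.
have [I _ XHcl] := XH_matroid.
have cl0 : mclosure I set0 = set0 by rewrite -XHcl XH0.
by rewrite -in_XH1 -(in_XH1 y x) !XHcl mclosure1_sym.
Qed.

Lemma Nset_eq x y : y \in Nset C x -> Nset C y = Nset C x.
Proof.
move=> yNx; apply/eqP.
by rewrite eqEsubset (Nset_trans _ _ yNx) (Nset_trans _ _ (Nset_sym _ _ yNx)).
Qed.

Lemma VH_eq_XH : VH C = XH C.
Proof.
apply: functional_extensionality => X; apply/setP => z; apply/bigcupP/idP.
- by case=> x meetX /Nset_eq zNx; rewrite inE zNx.
- by rewrite inE => meetX; exists z => //; exact: Nset_self.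
Qed.

End Covering.

Theorem theorem12 (T : finType) (C : {set {set T}}) :
  covering C ->
  is_matroid_closure (SH C) -> is_matroid_closure (XH C) ->
  [/\ is_matroid_closure (VH C),
      indep_of (SH C) \subset indep_of (XH C),
      indep_of (XH C) = indep_of (VH C),
      closed_of (SH C) \subset closed_of (XH C) &
      closed_of (XH C) = closed_of (VH C)].
Proof.
move=> coverC _ XH_matroid.
have XH_SH X : XH C X \subset SH C X by exact: XH_subset_SH.
rewrite VH_eq_XH //; split=> //.
- exact: indep_of_antimono.
- exact: closed_of_antimono (@subset_XH T C) XH_SH.
Qed.
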